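(* For $s\in\mathbb R$, as $N\to\infty$, $$\chi^{\mathbb K}_N\big(N^{-1}(1-s(2N)^{-1/2})\big)\sim(2N)^{1/2}f_0(s).$$
   Context: $\chi^{\mathbb K}_N(z)=\sum_{m=0}^{N-1}z^m\prod_{j=1}^m(N-j)$ for $z\in\mathbb R$ is the susceptibility of self-avoiding walk on the complete graph on $N$ vertices (generating function of the number of $m$-step self-avoiding walks from a fixed vertex). $f_0(s)=\int_0^\infty xe^{-\frac14x^4-\frac12sx^2}dx$. *)

From Stdlib Require Import Reals.
From Coquelicot Require Import Coquelicot.
Open Scope R_scope.

Fixpoint falling_prod (N m : nat) : R :=
  match m with
  | O => 1
  | S m' => falling_prod N m' * (INR N - INR (S m'))
  end.

Fixpoint chiK_partial (N : nat) (z : R) (k : nat) : R :=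
  match k with
  | O => 0
  | S k' => chiK_partial N z k' + z ^ k' * falling_prod N k'
  end.

(* Susceptibility of SAW on the complete graph on N vertices:
   chi^K_N(z) = sum_{m=0}^{N-1} z^m prod_{j=1}^m (N-j). *)
Definition chiK (N : nat) (z : R) : R := chiK_partial N z N.

Definition f0 (s : R) : R :=
  RInt_gen (fun x => x * exp (- (x ^ 4) / 4 - s * x ^ 2 / 2))
           (at_point 0) (Rbar_locally p_infty).

(** Put [h = (2N)^{-1/2}] and [z = N^{-1}(1 - s h)].  The [m]-th term of
    [chi^K_N(z)] is [t_m = prod_{j=1}^m (1 - s h)(1 - 2 j h^2)], a discretization
    of [g_s(m h)] where [g_s(u) = exp (- u^2 - s u)]. *)

From Stdlib Require Import Reals Lra Lia.
From Coquelicot Require Import Coquelicot.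
Open Scope R_scope.

Lemma exp_le x y : x <= y -> exp x <= exp y.
Proof. intros [H | ->]; [left; apply exp_increasing |]; lra. Qed.

Lemma exp_pow x j : exp x ^ j = exp (INR j * x).
Proof.
  induction j as [| j IH]; [simpl; rewrite Rmult_0_l, exp_0; ring |].
  rewrite S_INR, <- tech_pow_Rmult, IH, <- exp_plus. f_equal. ring.
Qed.

Lemma exp_neg_le_inv M : 0 <= M -> exp (- M) <= / (1 + M).
Proof.
  intros HM. rewrite exp_Ropp. apply Rinv_le_contravar; [lra | apply exp_ineq1_le].
Qed.

Lemma exp_neg_eventually_lt eps : 0 < eps ->
  exists M, 0 <= M /\ forall U, M <= U -> exp (- U) < eps.
Proof.
  intros Heps. exists (/ eps). split; [left; apply Rinv_0_lt_compat; lra |].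
  intros U HU.
  assert (Hinv : 0 < / eps) by (apply Rinv_0_lt_compat; lra).
  eapply Rle_lt_trans; [apply exp_neg_le_inv; lra |].
  apply Rmult_lt_reg_l with (1 + U); [lra |].
  rewrite Rinv_r by lra.
  assert (eps * / eps = 1) by (field; lra). nra.
Qed.

Lemma nat_above x : exists n : nat, x <= INR n.
Proof.
  destruct (nfloor_ex (Rmax x 0) (Rmax_r x 0)) as [n Hn].
  exists (S n). rewrite S_INR. pose proof (Rmax_l x 0). lra.
Qed.

(** The second-order lower bound [e^{-u}(1 - u^2) <= 1 - u] for [u <= 1];
    it is what makes the product [prod (1 - u_j)] comparable to [e^{-sum u_j}]. *)
Lemma exp_neg_mul_one_minus_sq_le u : u <= 1 -> exp (- u) * (1 - u * u) <= 1 - u.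
Proof.
  intros Hu. pose proof (exp_pos (- u)).
  destruct (Rle_or_lt u (-1)) as [Hu' | Hu'].
  - assert (1 <= u * u) by nra. nra.
  - pose proof (exp_ineq1_le u).
    assert (exp u * exp (- u) = 1) by (rewrite <- exp_plus, Rplus_opp_r; apply exp_0).
    nra.
Qed.

Lemma mul_relative_lower_bounds a b al be c d :
  0 <= a -> 0 <= b -> 0 < al -> 0 < be -> 0 <= c -> 0 <= d ->
  al * (1 - c) <= a -> be * (1 - d) <= b -> al * be * (1 - c - d) <= a * b.
Proof.
  intros Ha Hb Hal Hbe Hc Hd Hac Hbd.
  assert (0 <= a * b) by nra.
  assert (0 < al * be) by nra.
  destruct (Rle_or_lt c 1); [destruct (Rle_or_lt d 1) |]; [| nra | nra].
  assert (al * (1 - c) * (be * (1 - d)) <= a * b) by (apply Rmult_le_compat; nra).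
  assert (0 <= al * be * (c * d)) by (apply Rmult_le_pos; nra).
  nra.
Qed.

Definition gauss (s u : R) : R := exp (- (u * u) - s * u).

Lemma gauss_pos s u : 0 < gauss s u.
Proof. apply exp_pos. Qed.

(** [g_s] is bounded by its maximum [exp (s^2/4)], attained at [u = -s/2]. *)
Lemma gauss_le_max s u : gauss s u <= exp (s * s / 4).
Proof. apply exp_le. pose proof (Rle_0_sqr (u + s / 2)). unfold Rsqr in *. nra. Qed.

Lemma gauss_derive s u : is_derive (gauss s) u (- (2 * u + s) * gauss s u).
Proof. unfold gauss. auto_derive; auto. unfold Rminus; ring. Qed.

Lemma gauss_continuous s x : continuous (gauss s) x.
Proof. apply (ex_derive_continuous (V := R_NormedModule)). eexists; apply gauss_derive. Qed.

(** [|2v| e^{-v^2} <= 1], from [|2v| <= 1 + v^2 <= e^{v^2}]. *)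
Lemma abs_double_mul_exp_neg_sq_le v : Rabs (2 * v) * exp (- (v * v)) <= 1.
Proof.
  assert (H2 : Rabs (2 * v) <= exp (v * v)).
  { pose proof (exp_ineq1_le (v * v)).
    pose proof (Rle_0_sqr (1 + v)). pose proof (Rle_0_sqr (1 - v)). unfold Rsqr in *.
    apply Rabs_le; split; lra. }
  assert (exp (v * v) * exp (- (v * v)) = 1)
    by (rewrite <- exp_plus, Rplus_opp_r; apply exp_0).
  pose proof (exp_pos (- (v * v))). nra.
Qed.

Lemma gauss_lipschitz s u v : Rabs (gauss s u - gauss s v) <= exp (s * s / 4) * Rabs (u - v).
Proof.
  destruct (MVT_gen (gauss s) v u (fun c => - (2 * c + s) * gauss s c)) as [c [_ Hc]].
  - intros x _. apply gauss_derive.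
  - intros x _. apply continuity_pt_filterlim, gauss_continuous.
  - rewrite Hc, Rabs_mult. apply Rmult_le_compat_r; [apply Rabs_pos |].
    assert (E : - (2 * c + s) * gauss s c
                = - (2 * (c + s / 2) * exp (- ((c + s / 2) * (c + s / 2)))) * exp (s * s / 4)).
    { unfold gauss.
      replace (- (c * c) - s * c) with (- ((c + s / 2) * (c + s / 2)) + s * s / 4) by field.
      rewrite exp_plus. field. }
    rewrite E, Rabs_mult, Rabs_Ropp, Rabs_mult, !(Rabs_pos_eq (exp _)) by (left; apply exp_pos).
    pose proof (abs_double_mul_exp_neg_sq_le (c + s / 2)).
    pose proof (exp_pos (s * s / 4)). nra.
Qed.

Lemma gauss_tail s u : Rabs s + 1 <= u -> gauss s u <= exp (- u).
Proof.
  intros Hu. apply exp_le.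
  pose proof (Rle_abs s). pose proof (Rle_abs (- s)). rewrite Rabs_Ropp in *.
  assert (0 <= u * (u + s - 1)) by (apply Rmult_le_pos; lra). nra.
Qed.

Fixpoint psum (f : nat -> R) (k : nat) : R :=
  match k with
  | O => 0
  | S k' => psum f k' + f k'
  end.

Lemma psum_split f a b : psum f (a + b) = psum f a + psum (fun j => f (a + j)%nat) b.
Proof.
  induction b as [| b IH]; simpl.
  - rewrite Nat.add_0_r; ring.
  - rewrite Nat.add_succ_r; simpl. rewrite IH; ring.
Qed.

Lemma psum_scal c f k : psum (fun j => c * f j) k = c * psum f k.
Proof. induction k as [| k IH]; simpl; [| rewrite IH]; ring. Qed.

Lemma psum_le f g k : (forall m, (m < k)%nat -> f m <= g m) -> psum f k <= psum g k.
Proof.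
  induction k as [| k IH]; simpl; intros H; [lra |].
  pose proof (H k (Nat.lt_succ_diag_r k)).
  assert (psum f k <= psum g k) by (apply IH; intros; apply H; lia). lra.
Qed.

Lemma psum_nonneg f k : (forall m, (m < k)%nat -> 0 <= f m) -> 0 <= psum f k.
Proof.
  induction k as [| k IH]; simpl; intros H; [lra |].
  pose proof (H k (Nat.lt_succ_diag_r k)).
  assert (0 <= psum f k) by (apply IH; intros; apply H; lia). lra.
Qed.

Lemma psum_dist f g k B : (forall m, (m < k)%nat -> Rabs (f m - g m) <= B) ->
  Rabs (psum f k - psum g k) <= INR k * B.
Proof.
  induction k as [| k IH]; cbn [psum]; intros H.
  - rewrite Rminus_0_r, Rabs_R0; simpl; lra.
  - pose proof (H k (Nat.lt_succ_diag_r k)).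
    assert (Rabs (psum f k - psum g k) <= INR k * B) by (apply IH; intros; apply H; lia).
    replace (psum f k + f k - (psum g k + g k)) with ((psum f k - psum g k) + (f k - g k)) by ring.
    eapply Rle_trans; [apply Rabs_triang |]. rewrite S_INR. lra.
Qed.

Lemma psum_geom r k : psum (fun j => r ^ j) k * (1 - r) = 1 - r ^ k.
Proof. induction k as [| k IH]; simpl; [| rewrite Rmult_plus_distr_r, IH]; ring. Qed.

(** With ratio [e^{-h}], the geometric sum is at most [2/h] for [0 < h <= 1],
    since [1 - e^{-h} >= h / (1 + h)]. *)
Lemma geometric_exp_sum_le h k : 0 < h -> h <= 1 -> h * psum (fun j => exp (- h) ^ j) k <= 2.
Proof.
  intros Hh0 Hh1.
  set (r := exp (- h)).
  assert (Hr0 : 0 < r) by apply exp_pos.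
  assert (Hr : r * (1 + h) <= 1).
  { assert (r * exp h = 1) by (unfold r; rewrite <- exp_plus, Rplus_opp_l; apply exp_0).
    pose proof (exp_ineq1_le h). nra. }
  pose proof (psum_geom r k) as Hgeom.
  assert (0 <= r ^ k) by (apply pow_le; lra).
  assert (0 <= psum (fun j => r ^ j) k) by (apply psum_nonneg; intros; apply pow_le; lra).
  set (S := psum (fun j => r ^ j) k) in *.
  assert (h * S <= (1 + h) * ((1 - r) * S)) by nra.
  nra.
Qed.

Lemma ex_RInt_of_continuous (g : R -> R) (a b : R) : (forall x, continuous g x) -> ex_RInt g a b.
Proof. intros Hg. apply (ex_RInt_continuous (V := R_CompleteNormedModule)); auto. Qed.

Lemma RInt_from_origin_sub (g : R -> R) (a b : R) : (forall x, continuous g x) ->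
  RInt g 0 b - RInt g 0 a = RInt g a b.
Proof.
  intros Hg.
  rewrite <- (RInt_Chasles (V := R_CompleteNormedModule) g 0 a b)
    by apply ex_RInt_of_continuous, Hg.
  change (RInt g 0 a + RInt g a b - RInt g 0 a = RInt g a b). ring.
Qed.

Section LeftRiemannSum.

Variables (g : R -> R) (L : R).
Hypothesis g_cont : forall x, continuous g x.
Hypothesis g_lip : forall u v, Rabs (g u - g v) <= L * Rabs (u - v).

Lemma left_rectangle_error a h : 0 <= h -> Rabs (h * g a - RInt g a (a + h)) <= L * h * h.
Proof.
  intros Hh.
  assert (HL : 0 <= L).
  { pose proof (g_lip 1 0). pose proof (Rabs_pos (g 1 - g 0)).
    rewrite Rminus_0_r, Rabs_R1 in *. lra. }
  assert (E : h * g a - RInt g a (a + h) = RInt (fun u => g a - g u) a (a + h)).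
  { rewrite (RInt_minus (V := R_CompleteNormedModule) (fun _ => g a) g)
      by (apply ex_RInt_const || apply ex_RInt_of_continuous, g_cont).
    rewrite (RInt_const (V := R_CompleteNormedModule)).
    change (h * g a - RInt g a (a + h) = (a + h - a) * g a - RInt g a (a + h)). ring. }
  rewrite E. replace (L * h * h) with ((a + h - a) * (L * h)) by ring.
  apply abs_RInt_le_const; [lra | |].
  - apply (ex_RInt_minus (V := R_NormedModule)); [apply ex_RInt_const |].
    apply ex_RInt_of_continuous, g_cont.
  - intros t Ht. eapply Rle_trans; [apply g_lip |].
    apply Rmult_le_compat_l; [lra |]. rewrite Rabs_left1; lra.
Qed.

Lemma left_riemann_sum_error h n : 0 <= h ->
  Rabs (h * psum (fun m => g (INR m * h)) n - RInt g 0 (INR n * h)) <= INR n * (L * h * h).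
Proof.
  intros Hh. induction n as [| n IH]; cbn [psum].
  - rewrite Rmult_0_l, RInt_point. change (zero : R) with 0.
    rewrite Rmult_0_r, Rminus_0_r, Rabs_R0. simpl; lra.
  - pose proof (RInt_from_origin_sub g (INR n * h) (INR n * h + h) g_cont) as Hchasles.
    pose proof (left_rectangle_error (INR n * h) h Hh).
    replace (INR (S n) * h) with (INR n * h + h) by (rewrite S_INR; ring).
    replace (h * (psum (fun m => g (INR m * h)) n + g (INR n * h)) - RInt g 0 (INR n * h + h))
      with ((h * psum (fun m => g (INR m * h)) n - RInt g 0 (INR n * h))
            + (h * g (INR n * h) - RInt g (INR n * h) (INR n * h + h))) by lra.
    eapply Rle_trans; [apply Rabs_triang |]. rewrite S_INR. lra.
Qed.

End LeftRiemannSum.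

Lemma is_lim_seq_between u (l : R) M a b :
  is_lim_seq u l -> (forall k, (M <= k)%nat -> a <= u k <= b) -> a <= l <= b.
Proof.
  intros Hl Hb. apply (is_lim_seq_incr_n u M) in Hl.
  split.
  - apply (is_lim_seq_le (fun _ => a) (fun k => u (k + M)%nat) a l);
      [intros; apply Hb; lia | apply is_lim_seq_const | exact Hl].
  - apply (is_lim_seq_le (fun k => u (k + M)%nat) (fun _ => b) l b);
      [intros; apply Hb; lia | exact Hl | apply is_lim_seq_const].
Qed.

Section ExpTailIntegral.

Variables (g : R -> R) (K0 : R).
Hypothesis g_cont : forall x, continuous g x.
Hypothesis g_nonneg : forall u, 0 <= g u.
Hypothesis g_tail : forall u, K0 <= u -> g u <= exp (- u).

Lemma RInt_increment_nonneg U V : U <= V -> 0 <= RInt g 0 V - RInt g 0 U.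
Proof.
  intros HUV. rewrite RInt_from_origin_sub by exact g_cont.
  apply RInt_ge_0; auto. apply ex_RInt_of_continuous, g_cont.
Qed.

Lemma RInt_increment_tail U V : K0 <= U -> U <= V ->
  RInt g 0 V - RInt g 0 U <= exp (- U) - exp (- V).
Proof.
  intros HU HUV. rewrite RInt_from_origin_sub by exact g_cont.
  assert (Hexp_cont : forall x, continuous (fun u => exp (- u)) x).
  { intros x. apply (ex_derive_continuous (V := R_NormedModule)). auto_derive; auto. }
  assert (Hexp : RInt (fun u => exp (- u)) U V = exp (- U) - exp (- V)).
  { apply (is_RInt_unique (V := R_CompleteNormedModule)).
    replace (exp (- U) - exp (- V)) with (minus (- exp (- V)) (- exp (- U)))
      by (unfold minus, plus, opp; simpl; ring).
    apply (is_RInt_derive (V := R_CompleteNormedModule) (fun u => - exp (- u))).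
    - intros x _. auto_derive; auto. ring.
    - intros x _. apply Hexp_cont. }
  rewrite <- Hexp. apply RInt_le; auto; try apply ex_RInt_of_continuous; auto.
  intros x Hx. apply g_tail. lra.
Qed.

Lemma improper_integral_exp_tail : exists F : R,
  forall U, K0 <= U -> RInt g 0 U <= F <= RInt g 0 U + exp (- U).
Proof.
  set (G := fun U => RInt g 0 U).
  assert (Hlim : ex_finite_lim_seq (fun k => G (INR k))).
  { apply (ex_finite_lim_seq_incr _ (G K0 + exp (- K0))).
    - intros k. apply Rminus_le_0, RInt_increment_nonneg. rewrite S_INR; lra.
    - intros k. destruct (Rle_or_lt (INR k) K0) as [Hk | Hk].
      + pose proof (RInt_increment_nonneg _ _ Hk). pose proof (exp_pos (- K0)).
        unfold G. lra.
      + pose proof (RInt_increment_tail K0 (INR k) (Rle_refl K0) (Rlt_le _ _ Hk)).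
        pose proof (exp_pos (- INR k)). unfold G. lra. }
  destruct Hlim as [F HF]. exists F. intros U HU.
  destruct (nat_above U) as [M HM].
  apply (is_lim_seq_between _ _ M _ _ HF). intros k Hk. apply le_INR in Hk.
  pose proof (RInt_increment_nonneg U (INR k) ltac:(lra)).
  pose proof (RInt_increment_tail U (INR k) HU ltac:(lra)).
  pose proof (exp_pos (- INR k)). unfold G. lra.
Qed.

End ExpTailIntegral.

Lemma is_RInt_half_square_substitution (g : R -> R) (X : R) : (forall x, continuous g x) ->
  is_RInt (fun x => x * g (x * x / 2)) 0 X (RInt g 0 (X * X / 2)).
Proof.
  intros Hg.
  pose proof (is_RInt_comp (V := R_CompleteNormedModule) g (fun x => x * x / 2) (fun x => x) 0 X)
    as H.
  cbv beta in H. replace (0 * 0 / 2) with 0 in H by field.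
  apply H; intros x _; [apply Hg |]. split.
  - auto_derive; auto. field.
  - apply (ex_derive_continuous (V := R_NormedModule)). auto_derive; auto.
Qed.

Lemma is_RInt_gen_half_square_substitution (g : R -> R) (K0 F : R) :
  (forall x, continuous g x) ->
  (forall U, K0 <= U -> RInt g 0 U <= F <= RInt g 0 U + exp (- U)) ->
  is_RInt_gen (fun x => x * g (x * x / 2)) (at_point 0) (Rbar_locally p_infty) F.
Proof.
  intros Hg HF P [eps HP].
  destruct (exp_neg_eventually_lt eps (cond_pos eps)) as [M [HM0 HM]].
  set (B := 2 * (Rabs K0 + M) + 1).
  apply (Filter_prod _ _ _ (fun a => a = 0) (fun b => B < b)); [reflexivity | exists B; auto |].
  intros a b -> Hb. exists (RInt g 0 (b * b / 2)).
  split; [apply is_RInt_half_square_substitution, Hg |].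
  apply HP.
  pose proof (Rle_abs K0).
  pose proof (Rabs_pos K0).
  assert (HU : Rabs K0 + M <= b * b / 2).
  { unfold B in Hb. assert (b <= b * b) by nra. lra. }
  pose proof (HF (b * b / 2) ltac:(lra)). pose proof (HM (b * b / 2) ltac:(lra)).
  change (Rabs (RInt g 0 (b * b / 2) - F) < eps).
  rewrite Rabs_left1; lra.
Qed.

Lemma gauss_improper_integral s : exists F : R, 0 < F /\
  forall U, Rabs s + 1 <= U -> RInt (gauss s) 0 U <= F <= RInt (gauss s) 0 U + exp (- U).
Proof.
  destruct (improper_integral_exp_tail (gauss s) (Rabs s + 1)) as [F HF].
  - apply gauss_continuous.
  - intros u. left; apply gauss_pos.
  - apply gauss_tail.
  - exists F. split; [| exact HF].
    pose proof (Rabs_pos s).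
    assert (0 < RInt (gauss s) 0 (Rabs s + 1)).
    { apply RInt_gt_0; [lra | intros; apply gauss_pos | intros; apply gauss_continuous]. }
    pose proof (HF (Rabs s + 1) (Rle_refl _)). lra.
Qed.

(** [f_0(s)] is the improper integral of [g_s], by the substitution [u = x^2/2]. *)
Lemma f0_eq_gauss_integral s F :
  (forall U, Rabs s + 1 <= U -> RInt (gauss s) 0 U <= F <= RInt (gauss s) 0 U + exp (- U)) ->
  f0 s = F.
Proof.
  intros HF. unfold f0. apply is_RInt_gen_unique.
  apply (is_RInt_gen_ext (fun x => x * gauss s (x * x / 2))).
  - apply filter_forall. intros ab x _. unfold gauss. do 2 f_equal. field.
  - eapply is_RInt_gen_half_square_substitution; [apply gauss_continuous | exact HF].
Qed.

Definition saw_term (N : nat) (z : R) (m : nat) : R := z ^ m * falling_prod N m.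

Lemma chiK_partial_psum N z k : chiK_partial N z k = psum (saw_term N z) k.
Proof. induction k as [| k IH]; simpl; [| rewrite IH]; reflexivity. Qed.

(** The relative error [x + s^2 x + 4 x^3] (in units of [h]) of the comparison
    between the [m]-th term and [g_s(m h)], at [x = m h]. *)
Definition rel_err (s x : R) : R := x + s * s * x + 4 * (x * x * x).

Lemma rel_err_nonneg s x : 0 <= x -> 0 <= rel_err s x.
Proof. intros Hx. unfold rel_err. pose proof (Rle_0_sqr s). unfold Rsqr in *. nra. Qed.

Lemma rel_err_le s x K : 0 <= x -> x <= K -> rel_err s x <= rel_err s K.
Proof.
  intros Hx HxK. unfold rel_err. pose proof (Rle_0_sqr s). unfold Rsqr in *.
  assert (x * x <= K * K) by nra. assert (x * x * x <= K * K * K) by nra. nra.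
Qed.

Section TermsVersusGauss.

Variables (s h : R) (N : nat).
Hypothesis h_pos : 0 < h.
Hypothesis h_scale : 2 * INR N * (h * h) = 1.
Hypothesis sh_le_1 : s * h <= 1.

Let z := / INR N * (1 - s * h).
Let t := saw_term N z.

Lemma N_pos : 0 < INR N.
Proof. assert (0 < h * h) by nra. nra. Qed.

Lemma saw_term_succ m : t (S m) = t m * ((1 - s * h) * (1 - 2 * INR (S m) * (h * h))).
Proof.
  unfold t, saw_term, z. simpl. pose proof N_pos.
  assert (Hh : h * h = / (2 * INR N)).
  { apply Rmult_eq_reg_l with (2 * INR N); [rewrite h_scale; field |]; lra. }
  rewrite Hh. field. lra.
Qed.

Lemma saw_factor_pos m : (S m < N)%nat -> 0 < 1 - 2 * INR (S m) * (h * h).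
Proof. intros Hm. apply lt_INR in Hm. assert (0 < h * h) by nra. nra. Qed.

(** Upper bound [0 <= t_m <= g_s(m h)], from [1 - v <= e^{-v}]. *)
Lemma saw_term_upper m : (m < N)%nat -> 0 <= t m <= gauss s (INR m * h).
Proof.
  induction m as [| m IH]; intros Hm.
  - unfold t, saw_term, gauss. simpl.
    replace (- (0 * h * (0 * h)) - s * (0 * h)) with 0 by ring. rewrite exp_0. lra.
  - rewrite saw_term_succ. destruct IH as [IH0 IH1]; [lia |].
    pose proof (saw_factor_pos m Hm).
    set (u := 2 * INR (S m) * (h * h)) in *.
    pose proof (exp_ineq1_le (- (s * h))). pose proof (exp_ineq1_le (- u)).
    assert (Hfac : (1 - s * h) * (1 - u) <= exp (- (s * h)) * exp (- u))
      by (apply Rmult_le_compat; lra).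
    split; [apply Rmult_le_pos; nra |].
    apply Rle_trans with (gauss s (INR m * h) * (exp (- (s * h)) * exp (- u)));
      [apply Rmult_le_compat; nra |].
    unfold gauss, u. rewrite <- !exp_plus. apply exp_le. rewrite S_INR.
    pose proof (pos_INR m). assert (0 <= h * h) by nra. nra.
Qed.

(** Bound [M s^2 h^2 + 4 M^3 h^4] on the sum of the squares of the numbers [s h]
    and [2 j h^2], [1 <= j <= M]: the error term of the lower bound. *)
Let sq_err (M : R) : R := M * (s * s) * (h * h) + 4 * (M * M * M) * (h * h * h * h).

Lemma sq_err_nonneg M : 0 <= M -> 0 <= sq_err M.
Proof.
  intros HM. unfold sq_err.
  assert (0 <= M * (s * s) * (h * h)) by (apply Rmult_le_pos; [apply Rmult_le_pos |]; nra).
  assert (0 <= M * M * M) by (repeat apply Rmult_le_pos; lra).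
  assert (0 < h * h * h * h) by (repeat apply Rmult_lt_0_compat; lra).
  nra.
Qed.

(** Lower bound by induction: [t_m >= e^{-sum_j v_j} (1 - sum_j v_j^2)] where
    [v_j] runs over the numbers [s h] and [2 j h^2], [1 <= j <= m]. *)
Lemma saw_term_lower_exp m : (m < N)%nat ->
  exp (- (INR m * INR m + INR m) * (h * h) - s * INR m * h) * (1 - sq_err (INR m)) <= t m.
Proof.
  induction m as [| m IH]; intros Hm.
  - unfold t, saw_term, sq_err. simpl.
    replace (- (0 * 0 + 0) * (h * h) - s * 0 * h) with 0 by ring. rewrite exp_0. lra.
  - rewrite saw_term_succ. specialize (IH ltac:(lia)).
    pose proof (saw_term_upper m ltac:(lia)).
    pose proof (saw_factor_pos m Hm). pose proof (pos_INR m).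
    pose proof (sq_err_nonneg (INR m) (pos_INR m)).
    set (u := 2 * INR (S m) * (h * h)) in *.
    assert (Hfac : exp (- (s * h)) * exp (- u) * (1 - (s * h) * (s * h) - u * u)
                   <= (1 - s * h) * (1 - u)).
    { apply mul_relative_lower_bounds; try apply Rle_0_sqr; try apply exp_pos; try lra;
        apply exp_neg_mul_one_minus_sq_le; lra. }
    set (A := exp (- (INR m * INR m + INR m) * (h * h) - s * INR m * h)) in IH.
    assert (Hstep : A * (exp (- (s * h)) * exp (- u))
                      * (1 - sq_err (INR m) - ((s * h) * (s * h) + u * u))
                    <= t m * ((1 - s * h) * (1 - u))).
    { pose proof (Rle_0_sqr (s * h)). pose proof (Rle_0_sqr u). unfold Rsqr in *.
      apply mul_relative_lower_bounds; try lra; try nra;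
        [unfold A; apply exp_pos | apply Rmult_lt_0_compat; apply exp_pos]. }
    eapply Rle_trans; [| exact Hstep].
    assert (HA : A * (exp (- (s * h)) * exp (- u))
                 = exp (- (INR (S m) * INR (S m) + INR (S m)) * (h * h) - s * INR (S m) * h)).
    { unfold A, u. rewrite <- !exp_plus. f_equal. rewrite S_INR. ring. }
    rewrite HA. apply Rmult_le_compat_l; [left; apply exp_pos |].
    unfold sq_err, u. rewrite S_INR.
    assert (0 < h * h * h * h) by (repeat apply Rmult_lt_0_compat; lra).
    assert (0 <= INR m * (h * h * h * h)) by nra.
    assert (0 <= INR m * INR m * (h * h * h * h)) by nra.
    nra.
Qed.

(** Relative lower bound [t_m >= g_s(m h) (1 - rel_err s (m h) h)], using
    [e^{-m h^2} >= 1 - m h^2]. *)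
Lemma saw_term_lower m : (m < N)%nat ->
  gauss s (INR m * h) * (1 - rel_err s (INR m * h) * h) <= t m.
Proof.
  intros Hm. eapply Rle_trans; [| apply (saw_term_lower_exp m Hm)].
  set (x := INR m * (h * h)).
  pose proof (sq_err_nonneg (INR m) (pos_INR m)) as Hc.
  assert (Hsplit : exp (- (INR m * INR m + INR m) * (h * h) - s * INR m * h)
                   = gauss s (INR m * h) * exp (- x)).
  { unfold gauss, x. rewrite <- exp_plus. f_equal. ring. }
  assert (Herr : rel_err s (INR m * h) * h = x + sq_err (INR m))
    by (unfold rel_err, x, sq_err; ring).
  rewrite Hsplit, Herr, Rmult_assoc. apply Rmult_le_compat_l; [left; apply gauss_pos |].
  assert (Hx : 0 <= x) by (unfold x; apply Rmult_le_pos; [apply pos_INR | nra]).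
  pose proof (exp_ineq1_le (- x)).
  assert (exp (- x) <= 1) by (rewrite <- exp_0; apply exp_le; lra).
  destruct (Rle_or_lt (sq_err (INR m)) 1); [| nra].
  assert ((1 - x) * (1 - sq_err (INR m)) <= exp (- x) * (1 - sq_err (INR m)))
    by (apply Rmult_le_compat_r; lra).
  nra.
Qed.

Lemma saw_term_gauss_dist m K : (m < N)%nat -> INR m * h <= K ->
  Rabs (t m - gauss s (INR m * h)) <= exp (s * s / 4) * (rel_err s K * h).
Proof.
  intros Hm HK.
  pose proof (saw_term_lower m Hm). pose proof (saw_term_upper m Hm).
  set (x := INR m * h) in *.
  assert (Hx : 0 <= x) by (unfold x; apply Rmult_le_pos; [apply pos_INR | lra]).
  pose proof (rel_err_nonneg s x Hx). pose proof (rel_err_le s x K Hx HK).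
  pose proof (gauss_pos s x). pose proof (gauss_le_max s x).
  rewrite Rabs_left1 by lra.
  apply Rle_trans with (gauss s x * (rel_err s x * h)); [lra |].
  apply Rmult_le_compat; nra.
Qed.

(** Once [m h >= |s| + 1] the terms decay geometrically, so the scaled tail
    [h sum_{n <= m < N} t_m] is at most [2 e^{-n h}]. *)
Lemma saw_tail_sum_bound n : h <= 1 -> Rabs s + 1 <= INR n * h ->
  0 <= h * psum (fun j => t (n + j)%nat) (N - n) <= 2 * exp (- (INR n * h)).
Proof.
  intros Hh1 Hn.
  assert (Hterm : forall j, (j < N - n)%nat ->
            0 <= t (n + j)%nat <= exp (- (INR n * h)) * exp (- h) ^ j).
  { intros j Hj. pose proof (saw_term_upper (n + j) ltac:(lia)) as [Hlo Hup].
    split; [exact Hlo |].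
    rewrite exp_pow, <- exp_plus. eapply Rle_trans; [exact Hup |].
    pose proof (Rmult_le_pos (INR j) h (pos_INR j) (Rlt_le _ _ h_pos)).
    eapply Rle_trans; [apply gauss_tail; rewrite plus_INR; lra |].
    apply exp_le. rewrite plus_INR. lra. }
  assert (Hsum : psum (fun j => t (n + j)%nat) (N - n)
                 <= exp (- (INR n * h)) * psum (fun j => exp (- h) ^ j) (N - n)).
  { rewrite <- psum_scal. apply psum_le. intros; apply Hterm; auto. }
  assert (0 <= psum (fun j => t (n + j)%nat) (N - n))
    by (apply psum_nonneg; intros; apply Hterm; auto).
  pose proof (geometric_exp_sum_le h (N - n) h_pos Hh1).
  pose proof (exp_pos (- (INR n * h))).
  split; [nra |].
  apply Rle_trans with (exp (- (INR n * h)) * (h * psum (fun j => exp (- h) ^ j) (N - n))); nra.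
Qed.

(** For [n h <= K], the scaled head [h sum_{m < n} t_m] is within
    [K e^{s^2/4} (rel_err s K + 1) h] of [int_0^{n h} g_s]: compare it term by term
    with the left Riemann sum of [g_s], then the Riemann sum with the integral. *)
Lemma saw_head_sum_error n K : (n <= N)%nat -> INR n * h <= K ->
  Rabs (h * psum t n - RInt (gauss s) 0 (INR n * h))
    <= K * exp (s * s / 4) * (rel_err s K + 1) * h.
Proof.
  intros HnN HnK.
  assert (Hnh : 0 <= INR n * h) by (apply Rmult_le_pos; [apply pos_INR | lra]).
  set (L := exp (s * s / 4)). assert (HL : 0 < L) by apply exp_pos.
  pose proof (rel_err_nonneg s K ltac:(lra)).
  set (riemann := h * psum (fun m => gauss s (INR m * h)) n).
  assert (Hterms : Rabs (h * psum t n - riemann) <= INR n * h * (L * (rel_err s K * h))).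
  { unfold riemann. rewrite <- Rmult_minus_distr_l, Rabs_mult, Rabs_pos_eq by lra.
    replace (INR n * h * (L * (rel_err s K * h))) with (h * (INR n * (L * (rel_err s K * h))))
      by ring.
    apply Rmult_le_compat_l; [lra |]. apply psum_dist. intros m Hm.
    apply (saw_term_gauss_dist m K); [lia |].
    apply le_INR in Hm. rewrite S_INR in Hm.
    apply Rle_trans with (INR n * h); [apply Rmult_le_compat_r |]; lra. }
  assert (Hriemann : Rabs (riemann - RInt (gauss s) 0 (INR n * h)) <= INR n * h * (L * h)).
  { replace (INR n * h * (L * h)) with (INR n * (L * h * h)) by ring.
    apply left_riemann_sum_error; [apply gauss_continuous | apply gauss_lipschitz | lra]. }
  assert (INR n * h * (L * (rel_err s K * h)) <= K * (L * (rel_err s K * h)))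
    by (apply Rmult_le_compat_r; [apply Rmult_le_pos; [| apply Rmult_le_pos] |]; lra).
  assert (INR n * h * (L * h) <= K * (L * h))
    by (apply Rmult_le_compat_r; [apply Rmult_le_pos |]; lra).
  pose proof (Rabs_triang (h * psum t n - riemann) (riemann - RInt (gauss s) 0 (INR n * h))).
  replace (h * psum t n - riemann + (riemann - RInt (gauss s) 0 (INR n * h)))
    with (h * psum t n - RInt (gauss s) 0 (INR n * h)) in * by ring.
  fold L. lra.
Qed.

(** The quantitative estimate: splitting the sum at [n] with [|s| + 1 <= n h <= K],
    the head is [int_0^{n h} g_s] up to [O_K(h)], which is [int_0^oo g_s = F] up
    to [e^{-n h}], and the tail is at most [2 e^{-n h}]. *)
Lemma scaled_chi_error n K F : h <= 1 -> (n <= N)%nat ->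
  Rabs s + 1 <= INR n * h -> INR n * h <= K ->
  (forall U, Rabs s + 1 <= U -> RInt (gauss s) 0 U <= F <= RInt (gauss s) 0 U + exp (- U)) ->
  Rabs (h * psum t N - F)
    <= K * exp (s * s / 4) * (rel_err s K + 1) * h + 3 * exp (- (INR n * h)).
Proof.
  intros Hh1 HnN Hn HnK HF.
  set (head := h * psum t n). set (tail := h * psum (fun j => t (n + j)%nat) (N - n)).
  set (G := RInt (gauss s) 0 (INR n * h)).
  assert (Hsplit : h * psum t N = head + tail).
  { unfold head, tail. replace N with (n + (N - n))%nat at 1 by lia.
    rewrite psum_split. ring. }
  pose proof (saw_head_sum_error n K HnN HnK) as Hhead. fold head G in Hhead.
  apply Rabs_le_between in Hhead.
  pose proof (HF (INR n * h) Hn) as HG. fold G in HG.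
  pose proof (saw_tail_sum_bound n Hh1 Hn) as Htail. fold tail in Htail.
  rewrite Hsplit, Rabs_le_between. split; lra.
Qed.

End TermsVersusGauss.

Lemma mesh_eventually_lt c : 0 < c ->
  exists N0 : nat, forall N, (N0 <= N)%nat -> 0 < INR N /\ / sqrt (2 * INR N) < c.
Proof.
  intros Hc. destruct (nat_above (/ (2 * c * c))) as [N0 HN0].
  assert (Hinv : 0 < / (2 * c * c)) by (apply Rinv_0_lt_compat; nra).
  exists (S N0). intros N HN. apply le_INR in HN. rewrite S_INR in HN.
  assert (HNpos : 0 < INR N) by lra. split; [exact HNpos |].
  assert (HNc : 1 < 2 * INR N * (c * c)).
  { assert (/ (2 * c * c) * (2 * c * c) = 1) by (field; lra). nra. }
  set (q := sqrt (2 * INR N)).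
  assert (Hq : 0 < q) by (apply sqrt_lt_R0; lra).
  assert (Hqq : q * q = 2 * INR N) by (apply sqrt_sqrt; lra).
  assert (Hw : / q * q = 1) by (field; lra).
  destruct (Rlt_or_le (/ q) c) as [| Hcw]; [assumption | exfalso].
  assert (Hcq : c * q <= 1) by (rewrite <- Hw; apply Rmult_le_compat_r; lra).
  assert ((c * q) * (c * q) <= 1 * 1) by (apply Rmult_le_compat; nra).
  nra.
Qed.

Lemma grid_point_above K h : 0 <= K -> 0 < h -> exists n : nat, K < INR n * h <= K + h.
Proof.
  intros HK Hh.
  assert (HKh : 0 <= K / h) by (apply Rdiv_le_0_compat; lra).
  destruct (nfloor_ex (K / h) HKh) as [n0 Hn0].
  exists (S n0). rewrite S_INR.
  assert (E : K / h * h = K) by (field; lra).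
  split.
  - apply Rle_lt_trans with (K / h * h); [lra |]. apply Rmult_lt_compat_r; lra.
  - assert (INR n0 * h <= K / h * h) by (apply Rmult_le_compat_r; lra). nra.
Qed.

Lemma mesh_scale x : 0 < x -> 0 < / sqrt (2 * x) /\ 2 * x * (/ sqrt (2 * x) * / sqrt (2 * x)) = 1.
Proof.
  intros Hx. assert (Hsq : 0 < sqrt (2 * x)) by (apply sqrt_lt_R0; lra).
  split; [apply Rinv_0_lt_compat; lra |].
  rewrite <- Rinv_mult, sqrt_sqrt by lra. field. lra.
Qed.

Lemma splitting_index_exists K h N : 0 <= K -> 0 < h -> 2 * INR N * (h * h) = 1 ->
  (2 * K + 2) * h < 1 -> exists n : nat, (n <= N)%nat /\ K < INR n * h <= K + 1.
Proof.
  intros HK Hh Hscale HKh.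
  destruct (grid_point_above K h HK Hh) as [n [Hn1 Hn2]].
  exists n. split; [| nra].
  apply INR_le.
  assert (INR n = 2 * INR N * h * (INR n * h)) by (rewrite <- (Rmult_1_l (INR n)) at 1; nra).
  assert (0 < INR N * h) by nra. nra.
Qed.

(** The rescaled susceptibility [h_N chi^K_N(N^{-1}(1 - s h_N))] tends to
    [int_0^oo g_s]: given [eps], pick [K] with [3 e^{-K} < eps/2], then [N] so
    large that the [O_K(h_N)] error of [scaled_chi_error] is below [eps/2]. *)
Lemma scaled_chi_limit s F :
  (forall U, Rabs s + 1 <= U -> RInt (gauss s) 0 U <= F <= RInt (gauss s) 0 U + exp (- U)) ->
  is_lim_seq (fun N : nat => chiK N (/ INR N * (1 - s / sqrt (2 * INR N))) / sqrt (2 * INR N)) F.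
Proof.
  intros HF. apply is_lim_seq_spec. intros eps. pose proof (cond_pos eps) as Heps.
  destruct (exp_neg_eventually_lt (eps / 6) ltac:(lra)) as [M [HM0 HM]].
  pose proof (Rabs_pos s).
  set (K := Rabs s + 1 + M).
  assert (HK : Rabs s + 1 <= K /\ M <= K) by (unfold K; lra). clearbody K.
  set (C := (K + 1) * exp (s * s / 4) * (rel_err s (K + 1) + 1)).
  assert (HC : 0 < C).
  { pose proof (rel_err_nonneg s (K + 1) ltac:(lra)). pose proof (exp_pos (s * s / 4)).
    unfold C. apply Rmult_lt_0_compat; [apply Rmult_lt_0_compat |]; lra. }
  set (c := Rmin (/ (2 * K + 2)) (eps / (2 * C))).
  assert (Hc : 0 < c /\ (2 * K + 2) * c <= 1 /\ C * c <= eps / 2).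
  { assert (E1 : (2 * K + 2) * / (2 * K + 2) = 1) by (field; lra).
    assert (E2 : C * (eps / (2 * C)) = eps / 2) by (field; lra).
    pose proof (Rmin_l (/ (2 * K + 2)) (eps / (2 * C))) as H1. fold c in H1.
    pose proof (Rmin_r (/ (2 * K + 2)) (eps / (2 * C))) as H2. fold c in H2.
    assert (0 < c) by (apply Rmin_glb_lt; [apply Rinv_0_lt_compat | apply Rdiv_lt_0_compat]; lra).
    split; [| split]; nra. }
  destruct (mesh_eventually_lt c ltac:(lra)) as [N0 HN0].
  exists N0. intros N HN. destruct (HN0 N HN) as [HNpos Hh].
  destruct (mesh_scale (INR N) HNpos) as [h_pos h_scale].
  set (h := / sqrt (2 * INR N)) in *.
  assert (HKh : (2 * K + 2) * h < 1) by nra.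
  assert (HCh : C * h < eps / 2) by nra.
  assert (Hh1 : h <= 1) by nra.
  assert (sh_le_1 : s * h <= 1) by (pose proof (Rle_abs s); nra).
  destruct (splitting_index_exists K h N ltac:(lra) h_pos h_scale HKh) as [n [HnN Hn]].
  replace (chiK N (/ INR N * (1 - s / sqrt (2 * INR N))) / sqrt (2 * INR N))
    with (h * psum (saw_term N (/ INR N * (1 - s * h))) N)
    by (unfold chiK; rewrite chiK_partial_psum; unfold h, Rdiv; ring).
  pose proof (scaled_chi_error s h N h_pos h_scale sh_le_1 n (K + 1) F Hh1 HnN
                ltac:(lra) ltac:(lra) HF).
  pose proof (HM (INR n * h) ltac:(lra)).
  unfold C in HCh. lra.
Qed.

Theorem proposition1p5 (s : R) :
  is_lim_seq
    (fun N : nat =>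
       chiK N (/ INR N * (1 - s / sqrt (2 * INR N)))
       / (sqrt (2 * INR N) * f0 s))
    1.
Proof.
  destruct (gauss_improper_integral s) as [F [HF_pos HF]].
  rewrite (f0_eq_gauss_integral s F HF).
  pose proof (is_lim_seq_scal_r _ (/ F) _ (scaled_chi_limit s F HF)) as Hlim.
  simpl in Hlim. rewrite Rinv_r in Hlim by lra.
  eapply is_lim_seq_ext; [| exact Hlim].
  intros N. simpl. unfold Rdiv. rewrite Rinv_mult. ring.
Qed.
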